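(* Let $b\ge2$ be an integer and let $w=d_1\dots d_p$ be a fixed block of $b$-ary digits with $p\ge1$. Let $u=d_1\dots d_{p-1}$ and $v=d_2\dots d_p$. Then the following identities of formal Laurent series in $t$ hold: $$(1-bt)\,t^{1-p}Z_w(v,0)=1-t^{2-p}Z_w(v,0,u),\qquad (1-bt)\,Z_w(0)=1-t\,Z_w(v,0).$$ Moreover, $Z_w(v,0)(b^{-1})=b$ and $Z_w(v,0,u)(b^{-1})=b^{2-p}$.
   Context: Strings are finite sequences over $\{0,\dots,b-1\}$, including the empty string $\epsilon$. $k_w(X)$ is the number of possibly overlapping occurrences of $w$ in $X$. $Z_w(0)=\sum_l N_w(0,l)t^l$, where $N_w(0,l)$ is the number of strings of length $l$ with $k_w(X)=0$. For strings $x,y$, $Z_w(x,0,y)=\sum_l c_lt^l$, where $c_l$ is the number of strings of length $l$ with $k_w=0$, prefix $x$ and suffix $y$. Also $Z_w(x,0)=Z_w(x,0,\epsilon)$. When $p=1$, $u=v=\epsilon$. *)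

From mathcomp Require Import all_boot.
From Stdlib Require Import ZArith Reals.
Set Implicit Arguments. Unset Strict Implicit. Unset Printing Implicit Defensive.

Definition occ {T : eqType} (w X : seq T) : nat :=
  count (fun i => take (size w) (drop i X) == w) (iota 0 (size X - size w).+1).

Definition cnt (b : nat) (w x y : seq 'I_b) (l : nat) : nat :=
  #|[pred X : l.-tuple 'I_b | (occ w X == 0) && prefix x X && suffix y X]|.

(* Formal Laurent series in t with integer coefficients, as coefficient maps *)
Definition LS := Z -> Z.
Definition ser (c : nat -> nat) : LS :=
  fun n => if (n <? 0)%Z then 0%Z else Z.of_nat (c (Z.to_nat n)).
Definition tmul (k : Z) (f : LS) : LS := fun n => f (n - k)%Z.
Definition mul_1_bt (b : nat) (f : LS) : LS :=
  fun n => (f n - Z.of_nat b * f (n - 1))%Z.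
Definition ls_one : LS := fun n => if (n =? 0)%Z then 1%Z else 0%Z.
Definition ls_sub (f g : LS) : LS := fun n => (f n - g n)%Z.

Definition eval_inv_b (b : nat) (c : nat -> nat) (s : R) : Prop :=
  infinite_sum (fun l => (INR (c l) / INR b ^ l)%R) s.

(* A w-free string of length m+1 is a letter followed by a w-free string of
   length m which does not start with w; a w-free string of length m+1 with
   prefix v is a w-free string of length m with prefix v (or v itself),
   followed by a letter that does not complete an occurrence of w.  Hence
   C = Z_w(0), A = Z_w(v,0) and B = Z_w(v,0,u) satisfy
     b C_m = C_(m+1) + A_m,      b A_m + [m+1 = p-1] = A_(m+1) + B_m,
   which are the two identities read coefficientwise.  At t = 1/b the partial
   sums telescope, leaving a remainder b C_(n+1)/b^(n+1), resp.
   b A_(n+1)/b^(n+1) <= b C_(n+1)/b^(n+1); this tends to 0 because a w-free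
   string of length p+n is x ++ y with y w-free and x <> w, so that
   C_(p+n)/b^(p+n) <= (1 - b^-p) C_n/b^n. *)

From mathcomp Require Import all_boot.
From Stdlib Require Import ZArith Reals.
From Stdlib Require Import Lia Lra.
From mathcomp Require Import zify.

Lemma occ_eq0 (T : eqType) (w X : seq T) : (occ w X == 0) = ~~ infix w X.
Proof.
rewrite /occ -leqn0 leqNgt -has_count; congr (~~ _).
apply/hasP/infixP => [[i _ /eqP wE] | [s [s' ->]]].
  by exists (take i X), (drop (size w) (drop i X)); rewrite -{1}wE !cat_take_drop.
exists (size s); last by rewrite drop_size_cat // take_size_cat.
by rewrite mem_iota !size_cat; lia.
Qed.

Lemma prefix_rconsE (T : eqType) (v s : seq T) c :
  prefix v (rcons s c) = prefix v s || (v == rcons s c).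
Proof. by elim: s v => [|a s IHs] [|x v] //=; rewrite IHs eqseq_cons andb_orr. Qed.

Lemma take_size_cons (T : Type) (x : T) s : take (size s) (x :: s) = belast x s.
Proof. by rewrite lastI -cats1 take_size_cat ?size_belast. Qed.

Lemma sum_count (T : Type) (r : seq T) (P : pred T) : \sum_(s <- r) (P s : nat) = count P r.
Proof. by rewrite -sum1_count [RHS]big_mkcond. Qed.

Section Strings.
Variable b : nat.
Implicit Types (w s x y : seq 'I_b).

Fixpoint strings n : seq (seq 'I_b) :=
  if n is n'.+1 then [seq c :: s | c <- index_enum 'I_b, s <- strings n'] else [:: [::]].

Lemma strings_uniq n : uniq (strings n).
Proof.
elim: n => //= n IHn; apply: allpairs_uniq => //; first exact: index_enum_uniq.
by move=> [c s] [c' s'] _ _ [-> ->].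
Qed.

Lemma mem_strings n s : (s \in strings n) = (size s == n).
Proof.
elim: n s => [|n IHn] s; first by rewrite inE; case: s.
apply/allpairsP/idP => [[[c s'] [_ /= + ->]] | ]; first by rewrite IHn.
by case: s => // c s; rewrite /= eqSS -IHn => sn; exists (c, s); rewrite mem_index_enum.
Qed.

Lemma sum_const_ord n : \sum_(c : 'I_b) n = b * n.
Proof. by rewrite sum_nat_const card_ord. Qed.

(* Once Reals is imported, [^] on nat denotes Nat.pow, hence [expn]. *)
Lemma size_strings n : size (strings n) = expn b n.
Proof.
elim: n => //= n IHn; rewrite size_allpairs IHn expnS.
by rewrite -sum1_size sum_const_ord muln1.
Qed.

Lemma card_tuple_count l (P : pred (seq 'I_b)) :
  #|[pred X : l.-tuple 'I_b | P X]| = count P (strings l).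
Proof.
rewrite cardE /enum_mem size_filter -enumT /=.
rewrite (eq_count (a2 := preim val P)) // -count_map.
move: P; apply/permP/uniq_perm; rewrite ?strings_uniq ?(map_inj_uniq val_inj) ?enum_uniq //.
move=> s; rewrite mem_strings; apply/mapP/idP => [[X _ ->] | sl]; first by rewrite size_tuple.
by exists (Tuple sl); rewrite ?mem_enum.
Qed.

Lemma cnt_strings w x y l :
  cnt w x y l = \sum_(s <- strings l) [&& ~~ infix w s, prefix x s & suffix y s].
Proof.
rewrite sum_count /cnt.
rewrite (card_tuple_count _ (fun s => (occ w s == 0) && prefix x s && suffix y s)).
by apply: eq_count => s /=; rewrite occ_eq0 andbA.
Qed.

Lemma sum_strings_cat k n (F : seq 'I_b -> nat) :
  \sum_(s <- strings (k + n)) F s = \sum_(x <- strings k) \sum_(y <- strings n) F (x ++ y).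
Proof.
elim: k F => [|k IHk] F; first by rewrite big_seq1.
by rewrite addSn /= !big_allpairs_dep; apply: eq_bigr => c _; rewrite IHk.
Qed.

Lemma sum_strings1 (F : seq 'I_b -> nat) : \sum_(s <- strings 1) F s = \sum_(c : 'I_b) F [:: c].
Proof. by rewrite big_allpairs_dep; apply: eq_bigr => c _; rewrite big_seq1. Qed.

Lemma sum_delta (d : 'I_b) n : \sum_(c : 'I_b) (c == d) * n = n.
Proof. by rewrite (bigD1 d) //= eqxx big1 ?addn0 ?mul1n // => c /negbTE ->. Qed.

Lemma cnt0 w x : w != [::] -> cnt w x [::] 0 = (x == [::]).
Proof. by move=> w0; rewrite cnt_strings /= big_seq1 infixs0 (negbTE w0) prefixs0 andbT. Qed.

Lemma cnt_le_nil w x y m : cnt w x y m <= cnt w [::] [::] m.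
Proof.
rewrite !cnt_strings; apply: leq_sum => s _.
by rewrite prefix0s suffix0s andbT; case: (~~ _); rewrite ?leq_b1.
Qed.

Lemma cnt_cons_rec (d : 'I_b) v m :
  b * cnt (d :: v) [::] [::] m = cnt (d :: v) [::] [::] m.+1 + cnt (d :: v) v [::] m.
Proof.
rewrite !cnt_strings -add1n sum_strings_cat sum_strings1 /=.
rewrite -sum_const_ord -[X in _ = _ + X](sum_delta d) -big_split /=.
apply: eq_bigr => c _; rewrite big_distrr -big_split /=; apply: eq_bigr => s _.
rewrite !prefix0s !suffix0s !andbT [d == c]eq_sym.
by case: (c == d); case: (infix (d :: v) s); case: (prefix v s).
Qed.

Lemma cnt_rcons_rec u v (e : 'I_b) m : size v = size u ->
  b * cnt (rcons u e) v [::] m + (m.+1 == size v)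
  = cnt (rcons u e) v [::] m.+1 + cnt (rcons u e) v u m.
Proof.
move=> vu; set w := rcons u e.
have -> : nat_of_bool (m.+1 == size v) = \sum_(s <- strings m) \sum_(c : 'I_b) (v == rcons s c).
  rewrite eq_sym -mem_strings -count_uniq_mem ?strings_uniq // -sum_count -addn1 sum_strings_cat.
  by apply: eq_bigr => s _; rewrite sum_strings1; apply: eq_bigr => c _; rewrite cats1 eq_sym.
rewrite !cnt_strings -addn1 sum_strings_cat big_distrr -!big_split; apply: eq_bigr => s _.
rewrite sum_strings1 /= -sum_const_ord -[X in _ = _ + X](sum_delta e) -!big_split.
apply: eq_bigr => c _ /=.
rewrite cats1 prefix_rconsE infix_rconsl suffix_rcons !suffix0s !andbT [e == c]eq_sym.
have [vsc | _] := eqVneq v (rcons s c); last first.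
  rewrite orbF.
  by case: (c == e); case: (infix w s); case: (prefix v s); case: (suffix u s).
have lt_s : size s < size u by rewrite -vu vsc size_rcons.
have -> : prefix v s = false by apply/negP => /size_prefix; rewrite vu leqNgt lt_s.
have -> : suffix u s = false by apply/negP => /size_suffix; rewrite leqNgt lt_s.
have -> : infix w s = false.
  by apply/negP => /size_infix; rewrite size_rcons ltnNge (ltnW lt_s).
by case: (c == e).
Qed.

Lemma cnt_cat_le w n :
  cnt w [::] [::] (size w + n) <= (expn b (size w) - 1) * cnt w [::] [::] n.
Proof.
have -> : expn b (size w) - 1 = \sum_(x <- strings (size w)) (x != w).
  rewrite sum_count -(size_strings (size w)) -(count_predC (pred1 w)).
  by rewrite count_uniq_mem ?strings_uniq // mem_strings eqxx addKn.
rewrite !cnt_strings sum_strings_cat big_distrl /=; apply: leq_sum => x _.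
have [-> | _] /= := eqVneq x w.
  by rewrite mul0n big1 // => y _; rewrite prefix_infix.
rewrite mul1n; apply: leq_sum => y _; rewrite !prefix0s !suffix0s !andbT.
have [wy | _] := boolP (infix w y); last exact: leq_b1.
by rewrite (infix_trans wy (suffix_infix x y)).
Qed.

End Strings.

Lemma ser_nat (c : nat -> nat) m : ser c (Z.of_nat m) = Z.of_nat (c m).
Proof. by rewrite /ser (_ : (Z.of_nat m <? 0)%Z = false) ?Nat2Z.id //; apply/Z.ltb_ge; lia. Qed.

Lemma ser_neg (c : nat -> nat) z : (z < 0)%Z -> ser c z = 0%Z.
Proof. by rewrite /ser => /Z.ltb_lt ->. Qed.

Lemma sum_f_R0_indicator (f : nat -> R) k n :
  sum_f_R0 (fun l => INR (l == k) * f l)%R n = if k <= n then f k else 0%R.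
Proof.
elim: n => [|n IHn] /=; first by case: k => [|k] /=; ring.
rewrite IHn; case: (ltngtP k n.+1) => [kn | nk | ->].
- by rewrite -ltnS kn /=; ring.
- by rewrite leqNgt (ltnW nk) /=; ring.
- by rewrite ltnn /=; ring.
Qed.

Lemma INR_expn b n : INR (expn b n) = (INR b ^ n)%R.
Proof. by elim: n => //= n IHn; rewrite expnS mult_INR IHn. Qed.

Lemma powerRZ_1_sub x k : x <> 0%R -> powerRZ x (1 - Z.of_nat k) = (x / x ^ k)%R.
Proof.
move=> x_neq0; rewrite -Z.add_opp_r powerRZ_add // powerRZ_neg' pow_powerRZ.
by rewrite powerRZ_1.
Qed.

Lemma Un_cv_squeeze0 (u v : nat -> R) :
  (forall n, 0 <= u n <= v n)%R -> Un_cv v 0 -> Un_cv u 0.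
Proof.
move=> uv cv_v eps eps_gt0; have [N cvN] := cv_v eps eps_gt0.
exists N => n Nn; move: (uv n) (cvN n Nn); rewrite /R_dist !Rminus_0_r => uvn.
by rewrite !Rabs_right; lra.
Qed.

Lemma Un_cv_block_contraction (u : nat -> R) p q :
  0 < p -> (0 <= q < 1)%R -> (forall n, 0 <= u n)%R -> Un_decreasing u ->
  (forall n, u (p + n)%nat <= q * u n)%R -> Un_cv u 0.
Proof.
move=> p_gt0 [q_ge0 q_lt1] u_ge0 u_decr u_contr.
have u_pow k : (u (p * k)%nat <= q ^ k * u 0%nat)%R.
  elim: k => [|k IHk]; first by rewrite muln0 /=; lra.
  rewrite mulnS /= Rmult_assoc; apply: (Rle_trans _ _ _ (u_contr _)).
  exact: Rmult_le_compat_l.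
move=> eps eps_gt0.
have u0_gt0 : (0 < u 0%nat + 1)%R by have := u_ge0 0; lra.
have [N qN] := pow_lt_1_zero q (ltac:(rewrite Rabs_right; lra)) (eps / (u 0%nat + 1))%R
  (Rdiv_lt_0_compat _ _ eps_gt0 u0_gt0).
exists (p * N) => n /leP pNn.
rewrite /R_dist Rminus_0_r Rabs_right; last exact/Rle_ge.
have qN_ge0 := pow_le q N q_ge0.
have := qN N (le_n N); rewrite Rabs_right; last exact/Rle_ge.
move=> /(Rmult_lt_compat_r _ _ _ u0_gt0).
rewrite (_ : eps / (u 0%nat + 1) * (u 0%nat + 1) = eps)%R; last by field; lra.
have := decreasing_prop u (p * N) n u_decr (ltac:(apply/leP; exact: pNn)).
have := u_pow N; have := u_ge0 0; nra.
Qed.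

Definition density (b : nat) (c : nat -> nat) (n : nat) : R := (INR (c n) / INR b ^ n)%R.

Lemma density_ge0 b c n : 0 < b -> (0 <= density b c n)%R.
Proof.
move=> b_gt0; apply: Rmult_le_pos; first exact: pos_INR.
by apply/Rlt_le/Rinv_0_lt_compat/pow_lt/lt_0_INR/ltP.
Qed.

Lemma density_scale b (c : nat -> nat) j m n : 0 < b -> c (j + n) <= m * c n ->
  (density b c (j + n) <= INR m / INR b ^ j * density b c n)%R.
Proof.
move=> b_gt0 le_c; rewrite /density.
have bR_gt0 : (0 < INR b)%R by apply/lt_0_INR/ltP.
have bj := pow_lt _ j bR_gt0; have bn := pow_lt _ n bR_gt0.
rewrite pow_add; apply: (Rle_trans _ (INR (m * c n) / (INR b ^ j * INR b ^ n))).
  apply: Rmult_le_compat_r; first by left; apply: Rinv_0_lt_compat; nra.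
  exact/le_INR/leP.
by rewrite mult_INR; right; field; lra.
Qed.

Lemma density_cv0 b p (c : nat -> nat) : 0 < b -> 0 < p ->
  (forall n, c n.+1 <= b * c n) -> (forall n, c (p + n) <= (expn b p - 1) * c n) ->
  Un_cv (density b c) 0.
Proof.
move=> b_gt0 p_gt0 c_succ c_block.
apply: (Un_cv_block_contraction _ p (INR (expn b p - 1) / INR b ^ p)) p_gt0 _ _ _ _.
- split; first exact: (density_ge0 b (fun=> expn b p - 1) p b_gt0).
  have bp_gt0 : 0 < expn b p by rewrite expn_gt0 b_gt0.
  have bp := pow_lt _ p (lt_0_INR _ (ltP b_gt0)).
  rewrite minus_INR ?INR_expn; last exact/leP.
  apply: (Rmult_lt_reg_r (INR b ^ p)) => //.
  by rewrite /Rdiv Rmult_assoc Rinv_l /=; lra.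
- by move=> n; exact: density_ge0.
- move=> n; have := density_scale b c 1 b n b_gt0 (c_succ n).
  by rewrite add1n pow_1 Rdiv_diag ?Rmult_1_l //; apply/not_0_INR; lia.
- by move=> n; exact: density_scale.
Qed.

Lemma density_cv0_le b (c c' : nat -> nat) : 0 < b -> (forall n, c n <= c' n) ->
  Un_cv (density b c') 0 -> Un_cv (density b c) 0.
Proof.
move=> b_gt0 le_c; apply: Un_cv_squeeze0 => n; split; first exact: density_ge0.
apply: Rmult_le_compat_r; last exact/le_INR/leP.
by apply/Rlt_le/Rinv_0_lt_compat/pow_lt/lt_0_INR/ltP.
Qed.

Lemma cnt_density_cv0 b (w x y : seq 'I_b) : 0 < b -> w != [::] ->
  Un_cv (density b (cnt w x y)) 0.
Proof.
move=> b_gt0; case: w => [//|d v] _.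
apply: (@density_cv0_le b _ (cnt (d :: v) [::] [::]) b_gt0) => [n|]; first exact: cnt_le_nil.
apply: (density_cv0 b (size (d :: v)) _ b_gt0) => // n; last exact: cnt_cat_le.
by rewrite cnt_cons_rec leq_addr.
Qed.

Section Recurrence.
Local Set Implicit Arguments.
Local Unset Strict Implicit.
Variables (b k : nat) (A B : nat -> nat).
Hypothesis A0 : A 0 = (0 == k).
Hypothesis A_rec : forall m, b * A m + (m.+1 == k) = A m.+1 + B m.

Lemma mul_1_bt_ser :
  mul_1_bt b (ser A) =1 ls_sub (tmul (Z.of_nat k) ls_one) (tmul 1 (ser B)).
Proof.
move=> z; rewrite /mul_1_bt /ls_sub /tmul /ls_one.
have [z_lt0 | /Z2Nat.id <-] := Z.ltb_spec z 0.
  by rewrite !ser_neg; try lia; case: Z.eqb_spec; lia.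
case: (Z.to_nat z) => [|m].
  by rewrite ser_nat !ser_neg ?A0 ?Z.mul_0_r; try lia; case: k.
have -> : (Z.of_nat m.+1 - 1 = Z.of_nat m)%Z by lia.
by rewrite !ser_nat; have := A_rec m; case: Z.eqb_spec; case: eqP; lia.
Qed.

Lemma mul_1_bt_tmul_ser :
  mul_1_bt b (tmul (- Z.of_nat k) (ser A)) =1 ls_sub ls_one (tmul (1 - Z.of_nat k) (ser B)).
Proof.
move=> n; have := mul_1_bt_ser (n + Z.of_nat k)%Z; rewrite /mul_1_bt /ls_sub /tmul.
have -> : (n - - Z.of_nat k = n + Z.of_nat k)%Z by lia.
have -> : (n - 1 - - Z.of_nat k = n + Z.of_nat k - 1)%Z by lia.
have -> : (n - (1 - Z.of_nat k) = n + Z.of_nat k - 1)%Z by lia.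
by rewrite Z.add_simpl_r.
Qed.

Hypothesis b_gt0 : 0 < b.

Lemma density_rec l : (density b B l = INR b *
  (density b A l - density b A l.+1 + INR (l.+1 == k) / INR b ^ l.+1))%R.
Proof.
have bR_neq0 : INR b <> 0%R by apply: not_0_INR; lia.
have := A_rec l => /(f_equal INR); rewrite !plus_INR mult_INR => rec.
rewrite /density.
have -> : INR (B l) = (INR b * INR (A l) + INR (l.+1 == k) - INR (A l.+1))%R by lra.
by rewrite /=; field; split; first exact: pow_nonzero.
Qed.

Lemma sum_density_rec n : (sum_f_R0 (density b B) n = INR b *
  (sum_f_R0 (fun l => INR (l == k) / INR b ^ l) n.+1 - density b A n.+1))%R.
Proof.
elim: n => [|n IHn].
  by rewrite /= density_rec /density A0 /=; field; apply: not_0_INR; lia.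
by rewrite tech5 IHn (tech5 _ n.+1) density_rec; ring.
Qed.

Lemma eval_inv_b_rec : Un_cv (density b A) 0 -> eval_inv_b b B (INR b / INR b ^ k)%R.
Proof.
move=> cvA eps eps_gt0.
have bR_gt0 : (0 < INR b)%R by apply/lt_0_INR/ltP.
have [N cvN] := cvA (eps / INR b)%R (Rdiv_lt_0_compat _ _ eps_gt0 bR_gt0).
exists (maxn N k) => n /leP; rewrite geq_max => /andP [Nn kn].
have := cvN n.+1 (ltac:(apply/leP; lia)); rewrite /R_dist Rminus_0_r.
rewrite -/(density b B) sum_density_rec.
rewrite (sum_f_R0_indicator (fun l => / INR b ^ l)%R) (leqW kn).
have a_ge0 := density_ge0 b A n.+1 b_gt0.
rewrite (_ : _ - _ = - (INR b * density b A n.+1))%R; last by rewrite /Rdiv; ring.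
rewrite Rabs_Ropp !Rabs_right; try nra.
move=> a_lt; have : (INR b * density b A n.+1 < INR b * (eps / INR b))%R.
  exact: Rmult_lt_compat_l.
by rewrite (_ : INR b * (eps / INR b) = eps)%R //; field; lra.
Qed.

End Recurrence.

Theorem lemma5 (b : nat) (w : seq 'I_b) :
  2 <= b -> 1 <= size w ->
  let p := size w in
  let u := take (p - 1) w in
  let v := drop 1 w in
  mul_1_bt b (tmul (1 - Z.of_nat p) (ser (cnt w v [::])))
    =1 ls_sub ls_one (tmul (2 - Z.of_nat p) (ser (cnt w v u)))
  /\ mul_1_bt b (ser (cnt w [::] [::]))
    =1 ls_sub ls_one (tmul 1 (ser (cnt w v [::])))
  /\ eval_inv_b b (cnt w v [::]) (INR b)
  /\ eval_inv_b b (cnt w v u) (powerRZ (INR b) (2 - Z.of_nat p)).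
Proof.
case: w => [//|d v] b_ge2 _ p u v'; rewrite {}/v' [drop 1 _]/= drop0.
have pE : p = (size v).+1 := erefl.
have wE : d :: v = rcons u (last d v) by rewrite /u pE subn1 /= take_size_cons -lastI.
have vu : size v = size u by have := congr1 size wE; rewrite size_rcons => -[].
have b_gt0 : 0 < b by lia.
set C := cnt (d :: v) [::] [::]; set A := cnt (d :: v) v [::]; set B := cnt (d :: v) v u.
have C0 : C 0 = (0 == 0) by exact: cnt0.
have C_rec m : b * C m + (m.+1 == 0) = C m.+1 + A m by rewrite addn0 cnt_cons_rec.
have A0 : A 0 = (0 == size v) by rewrite /A cnt0 // [0 == _]eq_sym size_eq0.
have A_rec m : b * A m + (m.+1 == size v) = A m.+1 + B m.
  by rewrite /A /B wE; exact: cnt_rcons_rec.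
have cv0 x y : Un_cv (density b (cnt (d :: v) x y)) 0 by exact: cnt_density_cv0.
rewrite (_ : 1 - Z.of_nat p = - Z.of_nat (size v))%Z; last by lia.
rewrite (_ : 2 - Z.of_nat p = 1 - Z.of_nat (size v))%Z; last by lia.
split; [exact: mul_1_bt_tmul_ser A0 A_rec | split; [|split]].
- by move=> n; rewrite (mul_1_bt_ser C0 C_rec n) /ls_sub /tmul Z.sub_0_r.
- by have := eval_inv_b_rec C0 C_rec b_gt0 (cv0 _ _); rewrite pow_O Rdiv_1_r.
- rewrite powerRZ_1_sub; last by apply: not_0_INR; lia.
  exact: eval_inv_b_rec A0 A_rec b_gt0 (cv0 _ _).
Qed.
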